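(* For every integer $p\ge0$ and every complex $z$ with $e^z\ne1$, $$\sum_{n\ge0}\mathcal{B}_{n,p}\frac{z^n}{n!}=\frac{p!\,\exp(e^z-1)}{(e^z-1)^p}-\sum_{k=1}^{p}\frac{p^{\underline k}}{(e^z-1)^k}.$$
   Context: $p^{\underline k}=p(p-1)\cdots(p-k+1)$ is the falling factorial. For an integer $p\ge0$, the $p$-Bell numbers $\mathcal{B}_{n,p}$ are defined by $\sum_{n\ge0}\mathcal{B}_{n,p}\frac{z^n}{n!}=\sum_{n\ge0}\binom{n+p}{p}^{-1}\frac{(e^z-1)^n}{n!}$ (an entire function of $z$ whose Taylor series is the left side). *)

From Stdlib Require Import Reals Factorial.
From Coquelicot Require Import Coquelicot.
Open Scope R_scope.

Definition cexp (z : C) : C :=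
  (exp (fst z) * cos (snd z), exp (fst z) * sin (snd z)).

Fixpoint ffall (p k : nat) : nat :=
  match k with
  | O => 1%nat
  | S k' => (ffall p k' * (p - k'))%nat
  end.

(* The entire function  z |-> sum_{n>=0} binom(n+p,p)^{-1} (e^z-1)^n / n!,
   restricted to real z (where it is real-valued). *)
Definition pBell_egf (p : nat) (x : R) : R :=
  Series (fun n => (exp x - 1) ^ n / (INR (fact n) * Binomial.C (n + p) p)).

(* p-Bell numbers: B_{n,p} = n-th Taylor coefficient (times n!) at 0 of the
   entire function above, i.e. its n-th derivative at 0 (computed along the
   real axis, which gives the same value as the complex derivative). *)
Definition pBell (n p : nat) : R := Derive_n (pBell_egf p) n 0.

From Stdlib Require Import Reals Factorial Lia Lra FunctionalExtensionality.
From Coquelicot Require Import Coquelicot.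

(* Put w = e^z - 1.  The weights c_m = 1 / (m! binom(m + p, p)) = p! / (m + p)! are those
   of the exponential series shifted by p places, so
   sum_m c_m w^m = p! w^-p (e^w - sum_(k<p) w^k / k!), which is the right-hand side; this is
   proved by induction on p from c_(p+1)(m) = (p + 1) c_p(m + 1).  On the other hand
   (e^z - 1)^m = sum_n d_(m,n) z^n with d_(m,n) >= 0 and d_(m,n) = 0 for n < m, and the double
   series sum_m sum_n c_m d_(m,n) z^n converges absolutely (its modulus is bounded by
   sum_m c_m (e^|z| - 1)^m), so it can be summed by columns.  This gives the Taylor expansion
   sum_n (sum_(m<=n) c_m d_(m,n)) z^n of the p-Bell generating function, whose n-th
   derivative at 0 is therefore B_(n,p) = n! sum_(m<=n) c_m d_(m,n). *)

(** * Complex series and their components *)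

Lemma sum_n_fst (u : nat -> C) N : fst (sum_n u N) = sum_n (fun n => fst (u n)) N.
Proof.
  induction N as [|N IH]; rewrite ?sum_O, ?sum_Sn; [reflexivity|].
  rewrite <- IH; reflexivity.
Qed.

Lemma sum_n_snd (u : nat -> C) N : snd (sum_n u N) = sum_n (fun n => snd (u n)) N.
Proof.
  induction N as [|N IH]; rewrite ?sum_O, ?sum_Sn; [reflexivity|].
  rewrite <- IH; reflexivity.
Qed.

Lemma sum_n_ext_C (u v : nat -> C) n :
  (forall k, (k <= n)%nat -> u k = v k) -> sum_n u n = sum_n v n.
Proof. exact (sum_n_ext_loc u v n). Qed.

Lemma sum_n_Cmult_l (c : C) (u : nat -> C) n : sum_n (fun k => c * u k)%C n = (c * sum_n u n)%C.
Proof. exact (sum_n_mult_l c u n). Qed.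

Lemma sum_n_Cplus (u v : nat -> C) n :
  sum_n (fun k => u k + v k)%C n = (sum_n u n + sum_n v n)%C.
Proof. exact (sum_n_plus u v n). Qed.

Lemma RtoC_sum_n (f : nat -> R) n : RtoC (sum_n f n) = sum_n (fun k => RtoC (f k)) n.
Proof.
  induction n as [|n IH]; rewrite ?sum_O, ?sum_Sn; [reflexivity|].
  now rewrite <- IH, <- RtoC_plus.
Qed.

Lemma sum_n_shift {G : AbelianMonoid} (a : nat -> G) n :
  sum_n a (S n) = plus (a O) (sum_n (fun k => a (S k)) n).
Proof.
  induction n as [|n IH].
  - now rewrite sum_Sn, !sum_O.
  - now rewrite sum_Sn, IH, sum_Sn, plus_assoc.
Qed.

Lemma sum_n_le (a b : nat -> R) N : (forall n, a n <= b n) -> sum_n a N <= sum_n b N.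
Proof. intros Hab; rewrite !sum_n_Reals; apply sum_Rle; auto. Qed.

Lemma is_series_ext_C (a b : nat -> C) l :
  (forall n, a n = b n) -> is_series a l -> is_series b l.
Proof. exact (is_series_ext a b l). Qed.

Lemma is_series_C (u : nat -> C) (l : C) :
  is_series u l <->
  is_series (fun n => fst (u n)) (fst l) /\ is_series (fun n => snd (u n)) (snd l).
Proof.
  unfold is_series; split.
  - intros H; split; intros P [eps HP];
      destruct (H _ (locally_ball l eps)) as [N HN]; exists N; intros n Hn;
      apply HP; [rewrite <- sum_n_fst | rewrite <- sum_n_snd]; apply HN, Hn.
  - intros [H1 H2] P [eps HP].
    destruct (H1 _ (locally_ball (fst l) eps)) as [N1 HN1].
    destruct (H2 _ (locally_ball (snd l) eps)) as [N2 HN2].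
    exists (max N1 N2); intros n Hn; apply HP; split.
    + rewrite sum_n_fst; apply HN1; lia.
    + rewrite sum_n_snd; apply HN2; lia.
Qed.

Lemma is_series_eventually_zero {K : AbsRing} {V : NormedModule K} (a : nat -> V) N :
  (forall k, (N < k)%nat -> a k = zero) -> is_series a (sum_n a N).
Proof.
  intros Ha P HP; exists N; intros n Hn.
  induction Hn as [|n Hn IH]; [exact (locally_singleton _ _ HP)|].
  rewrite sum_Sn, Ha, plus_zero_r by lia; exact IH.
Qed.

Lemma is_series_R0 : is_series (fun _ : nat => 0) 0.
Proof.
  generalize (@is_series_eventually_zero R_AbsRing R_NormedModule (fun _ => 0) 0
                (fun _ _ => eq_refl)).
  now rewrite sum_O.
Qed.

Lemma is_series_RtoC (a : nat -> R) l :
  is_series a l -> is_series (fun n => RtoC (a n)) (RtoC l).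
Proof. intros H; apply is_series_C; split; [exact H|exact is_series_R0]. Qed.

Lemma is_series_sum_n {K : AbsRing} {V : NormedModule K} (v : nat -> nat -> V) s N :
  (forall k, is_series (fun m => v m k) (s k)) ->
  is_series (fun m => sum_n (v m) N) (sum_n s N).
Proof.
  intros Hv; induction N as [|N IH].
  - rewrite sum_O; eapply is_series_ext; [|apply Hv]; intros m; now rewrite sum_O.
  - rewrite sum_Sn; eapply is_series_ext; [|apply (is_series_plus _ _ _ _ IH (Hv (S N)))].
    intros m; now rewrite sum_Sn.
Qed.

Lemma is_series_prepend_zeros {K : AbsRing} {V : NormedModule K} (b : nat -> V) l k :
  is_series b l -> is_series (fun n => if (k <=? n)%nat then b (n - k)%nat else zero) l.
Proof.
  intros Hb; induction k as [|k IH].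
  - eapply is_series_ext; [|exact Hb]; intros n; now rewrite Nat.sub_0_r.
  - apply is_series_decr_1; replace (plus l (opp _)) with l; [exact IH|].
    simpl; symmetry; etransitivity; [|apply plus_zero_r]; f_equal.
    exact (@opp_zero (NormedModule.AbelianGroup K V)).
Qed.

(** * Interchanging the order of summation *)

Lemma sum_n_le_series (a : nat -> R) l :
  (forall n, 0 <= a n) -> is_series a l -> forall N, sum_n a N <= l.
Proof.
  intros Ha Hl; apply (is_lim_seq_incr_compare (sum_n a) l Hl).
  intros n; rewrite sum_Sn; specialize (Ha (S n)); simpl; unfold plus; simpl; lra.
Qed.

Lemma term_le_series (a : nat -> R) l :
  (forall n, 0 <= a n) -> is_series a l -> forall n, a n <= l.
Proof.
  intros Ha Hl n; eapply Rle_trans; [|apply (sum_n_le_series a l Ha Hl n)].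
  destruct n as [|n]; [rewrite sum_O; lra|].
  rewrite sum_Sn, sum_n_Reals; simpl; unfold plus; simpl.
  assert (0 <= sum_f_R0 a n) by (apply cond_pos_sum; auto); lra.
Qed.

Lemma is_series_le (a b : nat -> R) la lb :
  (forall n, a n <= b n) -> is_series a la -> is_series b lb -> la <= lb.
Proof.
  intros Hab Ha Hb; apply (is_lim_seq_le (sum_n a) (sum_n b) la lb); auto.
  intros n; apply sum_n_le, Hab.
Qed.

Lemma is_series_nonneg_bounded (a : nat -> R) M :
  (forall n, 0 <= a n) -> (forall N, sum_n a N <= M) -> exists l, is_series a l /\ l <= M.
Proof.
  intros Ha HM; destruct (ex_finite_lim_seq_incr (sum_n a) M) as [l Hl]; auto.
  { intros n; rewrite sum_Sn; specialize (Ha (S n)); simpl; unfold plus; simpl; lra. }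
  exists l; split; [exact Hl|].
  exact (is_lim_seq_le (sum_n a) (fun _ => M) l M HM Hl (is_lim_seq_const M)).
Qed.

Lemma is_series_swap_nonneg_le (v : nat -> nat -> R) s L :
  (forall m n, 0 <= v m n) -> (forall m, is_series (v m) (s m)) -> is_series s L ->
  exists t L', (forall n, is_series (fun m => v m n) (t n)) /\ is_series t L' /\ L' <= L.
Proof.
  intros Hv Hs HL.
  assert (Hs0 : forall m, 0 <= s m).
  { intros m; eapply Rle_trans; [apply (Hv m O)|apply (term_le_series _ _ (Hv m) (Hs m))]. }
  assert (Ht : forall n, is_series (fun m => v m n) (Series (fun m => v m n))).
  { intros n; apply Series_correct.
    destruct (is_series_nonneg_bounded (fun m => v m n) L) as [t [Ht _]];
      [auto| |now exists t].
    intros N; eapply Rle_trans; [|apply (sum_n_le_series s L Hs0 HL N)].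
    apply sum_n_le; intros m; apply (term_le_series _ _ (Hv m) (Hs m)). }
  exists (fun n => Series (fun m => v m n)).
  destruct (is_series_nonneg_bounded (fun n => Series (fun m => v m n)) L) as [L' [HL' Hle]].
  - intros n; eapply Rle_trans;
      [apply (Hv O n)|apply (term_le_series _ _ (fun m => Hv m n) (Ht n))].
  - intros N; refine (is_series_le _ _ _ _ _ (is_series_sum_n v _ N Ht) HL).
    intros m; apply (sum_n_le_series _ _ (Hv m) (Hs m)).
  - now exists L'.
Qed.

Lemma is_series_swap_nonneg (v : nat -> nat -> R) s L :
  (forall m n, 0 <= v m n) -> (forall m, is_series (v m) (s m)) -> is_series s L ->
  exists t, (forall n, is_series (fun m => v m n) (t n)) /\ is_series t L.
Proof.
  intros Hv Hs HL.
  destruct (is_series_swap_nonneg_le v s L Hv Hs HL) as [t [L' [Ht [HL' Hle]]]].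
  destruct (is_series_swap_nonneg_le (fun n m => v m n) t L' (fun n m => Hv m n) Ht HL')
    as [s' [L'' [Hs' [HL'' Hle']]]].
  assert (Es : forall m, s' m = s m).
  { intros m; rewrite <- (is_series_unique _ _ (Hs m)); apply eq_sym, is_series_unique, Hs'. }
  apply (is_series_ext _ _ _ Es) in HL''.
  assert (L'' = L) by (rewrite <- (is_series_unique _ _ HL''); apply is_series_unique, HL).
  exists t; split; [exact Ht|].
  replace L with L' by lra; exact HL'.
Qed.

Lemma is_series_swap_R (u w : nat -> nat -> R) (a s t : nat -> R) L :
  (forall m n, Rabs (u m n) <= w m n) ->
  (forall m, is_series (w m) (a m)) -> ex_series a ->
  (forall m, is_series (u m) (s m)) -> (forall n, is_series (fun m => u m n) (t n)) ->
  is_series s L -> is_series t L.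
Proof.
  intros Huw Hw [A HA] Hs Ht HL.
  (* [u = (w + u) - w] with both [w + u] and [w] nonnegative *)
  assert (Hw0 : forall m n, 0 <= w m n)
    by (intros m n; eapply Rle_trans; [apply Rabs_pos|apply Huw]).
  assert (Hwu0 : forall m n, 0 <= w m n + u m n)
    by (intros m n; specialize (Huw m n); apply Rabs_le_between in Huw; lra).
  destruct (is_series_swap_nonneg (fun m n => w m n + u m n) (fun m => a m + s m) (A + L)
              Hwu0 (fun m => is_series_plus _ _ _ _ (Hw m) (Hs m)) (is_series_plus _ _ _ _ HA HL))
    as [t1 [Ht1 HL1]].
  destruct (is_series_swap_nonneg w a A Hw0 Hw HA) as [t2 [Ht2 HL2]].
  assert (Et : forall n, t n = t1 n - t2 n).
  { intros n; rewrite <- (is_series_unique _ _ (Ht n)); apply is_series_unique.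
    eapply is_series_ext; [|apply (is_series_minus _ _ _ _ (Ht1 n) (Ht2 n))].
    intros m; simpl; unfold plus, opp; simpl; ring. }
  eapply is_series_ext; [intros n; symmetry; apply Et|].
  replace L with (A + L - A) by ring.
  apply (is_series_minus _ _ _ _ HL1 HL2).
Qed.

Lemma is_series_swap (u : nat -> nat -> C) (w : nat -> nat -> R) (a : nat -> R)
    (s t : nat -> C) L :
  (forall m n, Cmod (u m n) <= w m n) ->
  (forall m, is_series (w m) (a m)) -> ex_series a ->
  (forall m, is_series (u m) (s m)) -> (forall n, is_series (fun m => u m n) (t n)) ->
  is_series s L -> is_series t L.
Proof.
  intros Huw Hw Ha Hs Ht HL.
  apply is_series_C in HL as [HL1 HL2]; apply is_series_C; split.
  - refine (is_series_swap_R (fun m n => fst (u m n)) w a _ _ _ _ Hw Ha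
              (fun m => proj1 (proj1 (is_series_C _ _) (Hs m)))
              (fun n => proj1 (proj1 (is_series_C _ _) (Ht n))) HL1).
    intros m n; eapply Rle_trans; [|apply Huw].
    eapply Rle_trans; [apply Rmax_l|apply Rmax_Cmod].
  - refine (is_series_swap_R (fun m n => snd (u m n)) w a _ _ _ _ Hw Ha
              (fun m => proj2 (proj1 (is_series_C _ _) (Hs m)))
              (fun n => proj2 (proj1 (is_series_C _ _) (Ht n))) HL2).
    intros m n; eapply Rle_trans; [|apply Huw].
    eapply Rle_trans; [apply Rmax_r|apply Rmax_Cmod].
Qed.

Lemma is_series_cauchy (a b : nat -> C) la lb :
  is_series a la -> is_series b lb ->
  ex_series (fun n => Cmod (a n)) -> ex_series (fun n => Cmod (b n)) ->
  is_series (fun n => sum_n (fun k => a k * b (n - k)%nat)%C n) (la * lb)%C.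
Proof.
  intros Ha Hb Aa [B HB].
  set (u := fun k n => if (k <=? n)%nat then (a k * b (n - k)%nat)%C else zero).
  set (w := fun k n => if (k <=? n)%nat then Cmod (a k) * Cmod (b (n - k)%nat) else zero).
  apply (is_series_swap u w (fun k => Cmod (a k) * B) (fun k => (a k * lb)%C)).
  - intros k n; unfold u, w; destruct (k <=? n)%nat.
    + rewrite Cmod_mult; apply Rle_refl.
    + apply Req_le, Cmod_0.
  - intros k; exact (is_series_prepend_zeros (fun j => Cmod (a k) * Cmod (b j)) _ k
                       (is_series_scal_l (Cmod (a k)) _ _ HB)).
  - apply ex_series_scal_r, Aa.
  - intros k; eapply is_series_ext; [|exact (is_series_prepend_zeros (fun j => a k * b j)%C _ k
                                                (is_series_scal_l (a k) _ _ Hb))].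
    intros n; unfold u; destruct (k <=? n)%nat; reflexivity.
  - intros n; replace (sum_n (fun k => a k * b (n - k)%nat)%C n) with (sum_n (fun k => u k n) n).
    + apply (@is_series_eventually_zero C_AbsRing C_NormedModule (fun k => u k n) n).
      intros k Hk; unfold u.
      now replace (k <=? n)%nat with false by (symmetry; apply Nat.leb_gt; lia).
    + apply sum_n_ext_C; intros k Hk; unfold u.
      now replace (k <=? n)%nat with true by (symmetry; apply Nat.leb_le; lia).
  - rewrite Cmult_comm; eapply is_series_ext; [|apply (is_series_scal_l lb _ _ Ha)].
    intros k; apply Cmult_comm.
Qed.

(** * The complex exponential series *)

Lemma RtoC_neq_0 (r : R) : r <> 0 -> RtoC r <> 0%C.
Proof. intros Hr E; apply Hr, RtoC_inj, E. Qed.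

Lemma Cmult_cancel_l (c x y : C) : c <> 0%C -> (c * x = c * y)%C -> x = y.
Proof.
  intros Hc E; rewrite <- (Cmult_1_l x), <- (Cmult_1_l y), <- (Cinv_l c Hc), <- !Cmult_assoc.
  now rewrite E.
Qed.

Definition exp_term (w : C) (n : nat) : C := (RtoC (/ INR (fact n)) * Cpow w n)%C.

Lemma exp_term_S w n : (RtoC (INR (S n)) * exp_term w (S n) = w * exp_term w n)%C.
Proof.
  unfold exp_term; rewrite fact_simpl, mult_INR, Rinv_mult, RtoC_mult, Cpow_S.
  transitivity (RtoC (INR (S n) * / INR (S n)) * (w * (RtoC (/ INR (fact n)) * Cpow w n)))%C;
    [rewrite RtoC_mult; ring|].
  rewrite Rinv_r by apply not_0_INR, Nat.neq_succ_0; ring.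
Qed.

Lemma sum_n_exp_term_convol (a b : C) n :
  sum_n (fun k => exp_term a k * exp_term b (n - k))%C n = exp_term (a + b) n.
Proof.
  induction n as [|n IH].
  - rewrite sum_O; unfold exp_term; simpl; rewrite Rinv_1; ring.
  - (* multiply by [n + 1 = k + (n + 1 - k)] and absorb each factor into an [exp_term] *)
    apply (Cmult_cancel_l (RtoC (INR (S n)))); [apply RtoC_neq_0, not_0_INR, Nat.neq_succ_0|].
    rewrite exp_term_S, <- IH.
    transitivity
      (sum_n (fun k => RtoC (INR k) * exp_term a k * exp_term b (S n - k))%C (S n) +
       sum_n (fun k => exp_term a k * (RtoC (INR (S n - k)) * exp_term b (S n - k)))%C (S n))%C.
    { rewrite <- sum_n_Cmult_l, <- sum_n_Cplus; apply sum_n_ext_C; intros k Hk.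
      replace (INR (S n)) with (INR k + INR (S n - k)) by (rewrite <- plus_INR; f_equal; lia).
      rewrite RtoC_plus; ring. }
    rewrite sum_n_shift, sum_Sn, Nat.sub_diag; change (plus ?x ?y) with (x + y)%C.
    rewrite (sum_n_ext_C (fun k => RtoC (INR (S k)) * exp_term a (S k) * exp_term b (S n - S k))%C
               (fun k => a * (exp_term a k * exp_term b (n - k)))%C)
      by (intros k _; rewrite exp_term_S; simpl (S n - S k)%nat; ring).
    rewrite (sum_n_ext_C (fun k => exp_term a k * (RtoC (INR (S n - k)) * exp_term b (S n - k)))%C
               (fun k => b * (exp_term a k * exp_term b (n - k)))%C)
      by (intros k Hk; replace (S n - k)%nat with (S (n - k)) by lia; rewrite exp_term_S; ring).
    rewrite !sum_n_Cmult_l; simpl INR; ring.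
Qed.

Lemma is_series_exp (x : R) : is_series (fun n => / INR (fact n) * x ^ n) (exp x).
Proof. apply is_pseries_R, is_exp_Reals. Qed.

Lemma ex_series_Cmod_exp_term w : ex_series (fun n => Cmod (exp_term w n)).
Proof.
  exists (exp (Cmod w)); eapply is_series_ext; [|apply is_series_exp].
  intros n; unfold exp_term; rewrite Cmod_mult, Cmod_R, Cmod_pow, Rabs_pos_eq; [reflexivity|].
  apply Rlt_le, Rinv_0_lt_compat, INR_fact_lt_0.
Qed.

Lemma Cpow_Ci_even k : Cpow Ci (2 * k) = RtoC ((-1) ^ k).
Proof.
  rewrite Cpow_mult_r, RtoC_pow; f_equal.
  apply injective_projections; simpl; ring.
Qed.

Lemma is_series_exp_term_imag (y : R) : is_series (exp_term (0, y)) (cos y, sin y).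
Proof.
  set (c := fun n => / INR (fact n) * fst (Cpow Ci n)).
  set (s := fun n => / INR (fact n) * snd (Cpow Ci n)).
  assert (Ei : forall k, Cpow Ci (2 * k + 1) = (0, (-1) ^ k)).
  { intros k; rewrite Cpow_add_r, Cpow_Ci_even; apply injective_projections; simpl; ring. }
  assert (Ec : forall k, c (2 * k)%nat = cos_n k /\ c (2 * k + 1)%nat = 0).
  { intros k; unfold c, cos_n; rewrite Cpow_Ci_even, Ei; simpl.
    split; field; apply INR_fact_neq_0. }
  assert (Es : forall k, s (2 * k)%nat = 0 /\ s (2 * k + 1)%nat = sin_n k).
  { intros k; unfold s, sin_n; rewrite Cpow_Ci_even, Ei; simpl.
    split; field; apply INR_fact_neq_0. }
  assert (Ey : (0, y) = (RtoC y * Ci)%C) by (apply injective_projections; simpl; ring).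
  apply is_series_C; split.
  - apply (is_series_ext (fun n => c n * y ^ n)).
    { intros n; unfold exp_term, c; rewrite Ey, Cpow_mult_l, <- RtoC_pow, re_scal_l; simpl; ring. }
    unfold cos; destruct (exist_cos (Rsqr y)) as [l Hl].
    replace l with (l + y * 0) by ring.
    apply is_pseries_R, is_pseries_odd_even; apply is_pseries_R.
    + rewrite <- Rsqr_pow2; apply is_series_Reals in Hl.
      eapply is_series_ext; [|exact Hl]; intros k; now rewrite (proj1 (Ec k)).
    + eapply is_series_ext; [|exact is_series_R0]; intros k.
      rewrite (proj2 (Ec k)); symmetry; apply Rmult_0_l.
  - apply (is_series_ext (fun n => s n * y ^ n)).
    { intros n; unfold exp_term, s; rewrite Ey, Cpow_mult_l, <- RtoC_pow, im_scal_l; simpl; ring. }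
    unfold sin; destruct (exist_sin (Rsqr y)) as [l Hl].
    replace (y * l) with (0 + y * l) by ring.
    apply is_pseries_R, is_pseries_odd_even; apply is_pseries_R.
    + eapply is_series_ext; [|exact is_series_R0]; intros k.
      rewrite (proj1 (Es k)); symmetry; apply Rmult_0_l.
    + rewrite <- Rsqr_pow2; apply is_series_Reals in Hl.
      eapply is_series_ext; [|exact Hl]; intros k; now rewrite (proj2 (Es k)).
Qed.

Lemma is_series_cexp (w : C) : is_series (exp_term w) (cexp w).
Proof.
  destruct w as [x y].
  assert (Hx : is_series (exp_term (RtoC x)) (RtoC (exp x))).
  { eapply is_series_ext; [|apply is_series_RtoC, is_series_exp].
    intros n; unfold exp_term; now rewrite RtoC_mult, RtoC_pow. }
  replace (cexp (x, y)) with (RtoC (exp x) * (cos y, sin y))%C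
    by (unfold cexp; apply injective_projections; simpl; ring).
  eapply is_series_ext;
    [|exact (is_series_cauchy _ _ _ _ Hx (is_series_exp_term_imag y)
               (ex_series_Cmod_exp_term _) (ex_series_Cmod_exp_term _))].
  intros n; cbv beta; rewrite sum_n_exp_term_convol; f_equal.
  apply injective_projections; simpl; ring.
Qed.

Lemma cexp_RtoC_sub1 (r : R) : (cexp (RtoC r) - 1)%C = RtoC (exp r - 1).
Proof. unfold cexp; simpl; rewrite cos_0, sin_0; apply injective_projections; simpl; ring. Qed.

(** * Taylor coefficients of the powers of [e^z - 1] *)

Lemma is_series_RtoC_coef_fst (a : nat -> R) r L :
  is_series (fun n => RtoC (a n) * Cpow (RtoC r) n)%C L ->
  is_series (fun n => a n * r ^ n) (fst L).
Proof.
  intros H; eapply is_series_ext; [|exact (proj1 (proj1 (is_series_C _ _) H))].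
  intros n; cbv beta; now rewrite <- RtoC_pow, <- RtoC_mult.
Qed.

Definition cauchy_prod (a b : nat -> R) (n : nat) : R := sum_n (fun k => a k * b (n - k)%nat) n.

Lemma is_series_cauchy_coef (a b : nat -> R) z A B :
  is_series (fun n => RtoC (a n) * Cpow z n)%C A ->
  is_series (fun n => RtoC (b n) * Cpow z n)%C B ->
  ex_series (fun n => Rabs (a n) * Cmod z ^ n) -> ex_series (fun n => Rabs (b n) * Cmod z ^ n) ->
  is_series (fun n => RtoC (cauchy_prod a b n) * Cpow z n)%C (A * B)%C.
Proof.
  intros HA HB Aa Ab.
  assert (Hmod : forall c : nat -> R, ex_series (fun n => Rabs (c n) * Cmod z ^ n) ->
                   ex_series (fun n => Cmod (RtoC (c n) * Cpow z n)%C)).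
  { intros c Hc; eapply ex_series_ext; [|exact Hc].
    intros n; now rewrite Cmod_mult, Cmod_R, Cmod_pow. }
  eapply is_series_ext_C; [|exact (is_series_cauchy _ _ _ _ HA HB (Hmod a Aa) (Hmod b Ab))].
  intros n; unfold cauchy_prod; rewrite RtoC_sum_n, Cmult_comm, <- sum_n_Cmult_l.
  apply sum_n_ext_C; intros k Hk.
  replace n with (k + (n - k))%nat at 3 by lia.
  rewrite Cpow_add_r, RtoC_mult; ring.
Qed.

Definition expm1_coef (n : nat) : R := match n with O => 0 | S _ => / INR (fact n) end.

(* [INR (fact n) * expm1_pow_coef m n] is [m! S(n, m)], the number of surjections from an
   [n]-set onto an [m]-set. *)
Fixpoint expm1_pow_coef (m : nat) : nat -> R :=
  match m with
  | O => fun n => match n with O => 1 | S _ => 0 end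
  | S m => cauchy_prod (expm1_pow_coef m) expm1_coef
  end.

Lemma expm1_coef_bounds n : 0 <= expm1_coef n <= / INR (fact n).
Proof.
  destruct n as [|n]; unfold expm1_coef.
  - simpl; lra.
  - split; [apply Rlt_le, Rinv_0_lt_compat, INR_fact_lt_0|apply Rle_refl].
Qed.

Lemma expm1_pow_coef_nonneg m n : 0 <= expm1_pow_coef m n.
Proof.
  revert n; induction m as [|m IH]; intros n; simpl.
  - destruct n; lra.
  - unfold cauchy_prod; rewrite sum_n_Reals; apply cond_pos_sum; intros k.
    apply Rmult_le_pos; [apply IH|apply expm1_coef_bounds].
Qed.

Lemma expm1_pow_coef_lt m n : (n < m)%nat -> expm1_pow_coef m n = 0.
Proof.
  revert n; induction m as [|m IH]; intros n Hn; [lia|]; simpl; unfold cauchy_prod.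
  (* each term has [k < m], or [k = n = m] where [expm1_coef 0 = 0] *)
  rewrite (sum_n_ext_loc _ (fun _ => 0)), sum_n_const; [apply Rmult_0_r|].
  intros k Hk; destruct (Nat.eq_dec k m) as [->|Hkm].
  - replace (n - m)%nat with O by lia; apply Rmult_0_r.
  - rewrite IH by lia; apply Rmult_0_l.
Qed.

Lemma is_series_expm1 (z : C) :
  is_series (fun n => RtoC (expm1_coef n) * Cpow z n)%C (cexp z - 1)%C.
Proof.
  apply is_series_decr_1, (is_series_incr_1 (exp_term z)).
  match goal with |- is_series _ ?L => replace L with (cexp z) end; [exact (is_series_cexp z)|].
  unfold exp_term, expm1_coef; apply injective_projections; simpl; field.
Qed.

Lemma is_series_expm1_pow m (z : C) :
  is_series (fun n => RtoC (expm1_pow_coef m n) * Cpow z n)%C (Cpow (cexp z - 1) m).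
Proof.
  revert z; induction m as [|m IH]; intros z.
  - replace (Cpow (cexp z - 1) 0)
      with (sum_n (fun n => RtoC (expm1_pow_coef 0 n) * Cpow z n)%C 0)
      by (rewrite sum_O; simpl; ring).
    apply (@is_series_eventually_zero C_AbsRing C_NormedModule); intros [|k] Hk; [lia|].
    apply Cmult_0_l.
  - rewrite Cpow_S, Cmult_comm; apply is_series_cauchy_coef; [apply IH|apply is_series_expm1| |].
    + assert (Hr := is_series_RtoC_coef_fst _ _ _ (IH (RtoC (Cmod z)))).
      rewrite cexp_RtoC_sub1, <- RtoC_pow in Hr; eexists; eapply is_series_ext; [|exact Hr].
      intros n; now rewrite Rabs_pos_eq by apply expm1_pow_coef_nonneg.
    + refine (@ex_series_le R_AbsRing R_CompleteNormedModule _
                (fun n => / INR (fact n) * Cmod z ^ n) _ (ex_intro _ _ (is_series_exp (Cmod z)))).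
      intros n; change norm with Rabs.
      destruct (expm1_coef_bounds n) as [H0 H1].
      assert (0 <= Cmod z ^ n) by apply pow_le, Cmod_ge_0.
      rewrite (Rabs_pos_eq (expm1_coef n)), Rabs_pos_eq by nra.
      apply Rmult_le_compat_r; lra.
Qed.

Lemma is_series_expm1_subst (c : nat -> R) (z : C) L :
  ex_series (fun m => Rabs (c m) * (exp (Cmod z) - 1) ^ m) ->
  is_series (fun m => RtoC (c m) * Cpow (cexp z - 1) m)%C L ->
  is_series (fun n => RtoC (sum_n (fun m => (c m * expm1_pow_coef m n)%R) n) * Cpow z n)%C L.
Proof.
  intros Hc HL.
  apply (is_series_swap (fun m n => RtoC (c m * expm1_pow_coef m n) * Cpow z n)%C
           (fun m n => Rabs (c m) * (expm1_pow_coef m n * Cmod z ^ n))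
           (fun m => Rabs (c m) * (exp (Cmod z) - 1) ^ m)
           (fun m => RtoC (c m) * Cpow (cexp z - 1) m)%C); [| | exact Hc | | |exact HL].
  - intros m n; apply Req_le.
    rewrite Cmod_mult, Cmod_R, Cmod_pow, Rabs_mult, (Rabs_pos_eq (expm1_pow_coef m n))
      by apply expm1_pow_coef_nonneg.
    ring.
  - intros m.
    assert (H := is_series_RtoC_coef_fst _ _ _ (is_series_expm1_pow m (RtoC (Cmod z)))).
    rewrite cexp_RtoC_sub1, <- RtoC_pow in H.
    exact (is_series_scal_l (Rabs (c m)) _ _ H).
  - intros m; eapply is_series_ext_C;
      [|exact (is_series_scal_l (RtoC (c m)) _ _ (is_series_expm1_pow m z))].
    intros n; rewrite RtoC_mult; apply Cmult_assoc.
  - intros n.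
    replace (RtoC (sum_n (fun m => (c m * expm1_pow_coef m n)%R) n) * Cpow z n)%C
      with (sum_n (fun m => RtoC (c m * expm1_pow_coef m n) * Cpow z n)%C n).
    + apply (@is_series_eventually_zero C_AbsRing C_NormedModule); intros m Hm.
      rewrite expm1_pow_coef_lt, Rmult_0_r by lia; apply Cmult_0_l.
    + rewrite RtoC_sum_n, Cmult_comm, <- sum_n_Cmult_l; apply sum_n_ext_C; intros m _.
      apply Cmult_comm.
Qed.

(** * p-Bell numbers *)

Definition pBell_weight (p m : nat) : R := / (INR (fact m) * Binomial.C (m + p) p).

Definition pBell_coef (p n : nat) : R :=
  sum_n (fun m => pBell_weight p m * expm1_pow_coef m n) n.

Lemma pBell_weight_eq p m : pBell_weight p m = INR (fact p) / INR (fact (m + p)).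
Proof.
  unfold pBell_weight, Binomial.C; replace (m + p - p)%nat with m by lia.
  field; repeat split; apply INR_fact_neq_0.
Qed.

Lemma pBell_weight_bounds p m : 0 <= pBell_weight p m <= INR (fact p) / INR (fact m).
Proof.
  rewrite pBell_weight_eq; split.
  - apply Rle_mult_inv_pos; [apply pos_INR|apply INR_fact_lt_0].
  - apply Rmult_le_compat_l; [apply pos_INR|].
    apply Rinv_le_contravar; [apply INR_fact_lt_0|apply le_INR, fact_le; lia].
Qed.

Lemma ex_series_pBell_weight p r : ex_series (fun m => Rabs (pBell_weight p m * r ^ m)).
Proof.
  refine (@ex_series_le R_AbsRing R_CompleteNormedModule _
            (fun m => INR (fact p) * (/ INR (fact m) * Rabs r ^ m)) _
            (ex_series_scal_l _ _ (ex_intro _ _ (is_series_exp (Rabs r))))).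
  intros m; change norm with Rabs; rewrite Rabs_Rabsolu, Rabs_mult, RPow_abs.
  destruct (pBell_weight_bounds p m) as [H0 H1].
  rewrite (Rabs_pos_eq (pBell_weight p m)), <- Rmult_assoc by exact H0.
  apply Rmult_le_compat_r; [apply Rabs_pos|exact H1].
Qed.

Lemma pBell_coef_nonneg p n : 0 <= pBell_coef p n.
Proof.
  unfold pBell_coef; rewrite sum_n_Reals; apply cond_pos_sum; intros m.
  apply Rmult_le_pos; [apply pBell_weight_bounds|apply expm1_pow_coef_nonneg].
Qed.

Lemma is_series_pBell_coef p (z : C) L :
  is_series (fun m => RtoC (pBell_weight p m) * Cpow (cexp z - 1) m)%C L ->
  is_series (fun n => RtoC (pBell_coef p n) * Cpow z n)%C L.
Proof.
  apply is_series_expm1_subst.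
  eapply ex_series_ext; [|apply (ex_series_pBell_weight p (exp (Cmod z) - 1))].
  intros m; cbv beta; rewrite Rabs_mult, (Rabs_pos_eq (_ ^ m)); [reflexivity|].
  apply pow_le; generalize (exp_ineq1_le (Cmod z)) (Cmod_ge_0 z); lra.
Qed.

Lemma is_series_pBell_egf p x : is_series (fun n => pBell_coef p n * x ^ n) (pBell_egf p x).
Proof.
  assert (Hw : is_series (fun m => pBell_weight p m * (exp x - 1) ^ m) (pBell_egf p x)).
  { unfold pBell_egf; eapply is_series_ext; [|apply Series_correct].
    - intros m; unfold pBell_weight, Rdiv; apply Rmult_comm.
    - eapply ex_series_ext; [|apply ex_series_Rabs, (ex_series_pBell_weight p (exp x - 1))].
      intros m; unfold pBell_weight, Rdiv; apply Rmult_comm. }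
  apply is_series_RtoC in Hw.
  apply (is_series_RtoC_coef_fst _ _ (RtoC (pBell_egf p x))), is_series_pBell_coef.
  rewrite cexp_RtoC_sub1; eapply is_series_ext_C; [|exact Hw].
  intros m; cbv beta; now rewrite RtoC_mult, RtoC_pow.
Qed.

Lemma pBell_eq n p : pBell n p = pBell_coef p n * INR (fact n).
Proof.
  assert (E : pBell_egf p = PSeries (pBell_coef p)).
  { apply functional_extensionality; intros x; symmetry; apply is_series_unique.
    apply is_series_pBell_egf. }
  unfold pBell; rewrite E; apply Derive_n_coef.
  (* convergence at [x = 1] gives radius at least 1 *)
  apply (Rbar_lt_le_trans _ 1); [simpl; lra|].
  apply (proj1 (Lub_Rbar_correct (CV_disk (pBell_coef p)))).
  exists (pBell_egf p 1); eapply is_series_ext; [|apply is_series_pBell_egf].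
  intros k; symmetry; apply Rabs_pos_eq, Rmult_le_pos; [apply pBell_coef_nonneg|apply pow_le; lra].
Qed.

Lemma ffall_S p k : ffall (S p) (S k) = (S p * ffall p k)%nat.
Proof.
  induction k as [|k IH]; [simpl; lia|].
  change (ffall (S p) (S (S k))) with (ffall (S p) (S k) * (S p - S k))%nat.
  rewrite IH; simpl (ffall p (S k)); replace (S p - S k)%nat with (p - k)%nat by lia; lia.
Qed.

Lemma sum_n_from_1 (h : nat -> C) n :
  sum_n (fun k => if (1 <=? k)%nat then h k else RtoC 0) n = (sum_n h n - h O)%C.
Proof.
  induction n as [|n IH]; rewrite ?sum_O, ?sum_Sn.
  - simpl; ring.
  - rewrite IH; change (plus ?x ?y) with (x + y)%C; simpl; ring.
Qed.

Definition pBell_closed_form (p : nat) (w : C) : C :=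
  (RtoC (INR (fact p)) * cexp w / Cpow w p
   - sum_n (fun k => if (1 <=? k)%nat then (RtoC (INR (ffall p k)) / Cpow w k)%C else RtoC 0) p)%C.

Lemma pBell_closed_form_S p (w : C) : w <> 0%C ->
  pBell_closed_form (S p) w = (RtoC (INR (S p)) / w * (pBell_closed_form p w - 1))%C.
Proof.
  intros Hw; unfold pBell_closed_form; rewrite !sum_n_from_1, sum_n_shift.
  rewrite (sum_n_ext_C (fun k => RtoC (INR (ffall (S p) (S k))) / Cpow w (S k))%C
             (fun k => RtoC (INR (S p)) / w * (RtoC (INR (ffall p k)) / Cpow w k))%C).
  2:{ intros k _; rewrite ffall_S, mult_INR, RtoC_mult, Cpow_S.
      field; split; [apply Cpow_nz|]; exact Hw. }
  rewrite sum_n_Cmult_l; change (plus ?x ?y) with (x + y)%C.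
  rewrite fact_simpl, mult_INR, RtoC_mult, Cpow_S; simpl ffall; simpl Cpow.
  change (INR 1) with 1; field; split; [apply Cpow_nz|]; exact Hw.
Qed.

Lemma is_series_pBell_weight p (w : C) : w <> 0%C ->
  is_series (fun m => RtoC (pBell_weight p m) * Cpow w m)%C (pBell_closed_form p w).
Proof.
  intros Hw; induction p as [|p IH].
  - replace (pBell_closed_form 0 w) with (cexp w)
      by (unfold pBell_closed_form; rewrite sum_O; simpl; field).
    eapply is_series_ext_C; [|apply is_series_cexp].
    intros m; unfold exp_term; rewrite pBell_weight_eq, Nat.add_0_r; simpl (fact 0).
    f_equal; f_equal; simpl; field; apply INR_fact_neq_0.
  - assert (Htail : is_series (fun m => RtoC (pBell_weight p (S m)) * Cpow w (S m))%C
                      (pBell_closed_form p w - 1)%C).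
    { apply (is_series_incr_1 (fun m => RtoC (pBell_weight p m) * Cpow w m)%C).
      replace (plus _ _) with (pBell_closed_form p w); [exact IH|].
      rewrite pBell_weight_eq; simpl Nat.add.
      unfold plus; simpl; rewrite Rdiv_diag by apply INR_fact_neq_0; ring. }
    rewrite pBell_closed_form_S by exact Hw.
    eapply is_series_ext_C; [|exact (is_series_scal_l (RtoC (INR (S p)) / w)%C _ _ Htail)].
    intros m; cbv beta; change (scal ?x ?y) with (x * y)%C.
    assert (E : pBell_weight (S p) m = INR (S p) * pBell_weight p (S m)).
    { rewrite !pBell_weight_eq, fact_simpl, mult_INR.
      replace (m + S p)%nat with (S m + p)%nat by lia; unfold Rdiv; ring. }
    rewrite E, RtoC_mult, Cpow_S; field; exact Hw.
Qed.

Theorem mainTheorem5 (p : nat) (z : C) (hz : cexp z <> RtoC 1) :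
  is_series (fun n : nat => (RtoC (pBell n p) * Cpow z n / RtoC (INR (fact n)))%C)
    (RtoC (INR (fact p)) * cexp (cexp z - 1) / Cpow (cexp z - 1) p
     - sum_n (fun k : nat =>
                if (1 <=? k)%nat
                then (RtoC (INR (ffall p k)) / Cpow (cexp z - 1) k)%C
                else RtoC 0) p)%C.
Proof.
  assert (Hw : (cexp z - 1)%C <> 0%C) by (intros E; apply hz, Ceq_minus, E).
  eapply is_series_ext_C;
    [|exact (is_series_pBell_coef p z _ (is_series_pBell_weight p _ Hw))].
  intros n; rewrite pBell_eq, RtoC_mult; field.
  apply RtoC_neq_0, INR_fact_neq_0.
Qed.
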